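(* Let $n\ge 5$, $k\in\{2,\dots,n-3\}$, $\gamma>0$, and let $0<x_1\le x_2\le\dots\le x_{n-1}$ be real numbers. Assume that $$x_I+x_{I^*}=2\gamma$$ for all $I\subset\{1,\dots,n-1\}$ with $|I|=k$, where $I^*:=\{n-i: i\in I\}$. Then $x_1=\dots=x_{n-1}$.
   Context: For $I\subset\{1,\dots,n-1\}$, $x_I:=\prod_{\iota\in I}x_\iota$ and $|I|$ is the cardinality of $I$. *)

From mathcomp Require Import all_boot all_order all_algebra.
Set Implicit Arguments. Unset Strict Implicit. Unset Printing Implicit Defensive.
Import Order.TTheory GRing.Theory Num.Theory.
Local Open Scope ring_scope.

(* Indices 1..n-1 are represented as elements of 'I_n different from 0.
   x_I := prod_{i in I} x_i. *)
Definition xprod (R : comNzRingType) (n : nat) (x : 'I_n -> R) (I : {set 'I_n}) : R :=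
  \prod_(i in I) x i.

(* I^* := { n - i : i in I }; for 0 < i < n, insubd i (n - i) is the ordinal n - i *)
Definition star (n : nat) (I : {set 'I_n}) : {set 'I_n} :=
  [set (insubd i (n - val i)%N : 'I_n) | i in I].

From mathcomp Require Import all_boot all_order all_algebra.
From mathcomp Require Import zify ring lra.
Set Implicit Arguments.
Unset Strict Implicit.
Unset Printing Implicit Defensive.

Import Order.TTheory GRing.Theory Num.Theory.
Local Open Scope ring_scope.

(* Write a := x_1 and b := x_{n-1}.  If a <> b, then for every (k-1)-set S avoiding
   both ends, the constraints for {1} u S and {n-1} u S give (a - b)(x_S - x_{S^*}) = 0,
   so x_S = x_{S^*}.  Applied to {2} u M and {n-2} u M with M = {3, ..., k} this forces
   x_2 = x_{n-2}, and by monotonicity x is constant, say c, on {2, ..., n-2}.  The constraints for three sets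
   built from intervals in the middle then give a + b = 2c and ab = c^2, hence a = b,
   a contradiction.  Once a = b, monotonicity makes x constant. *)

Section Mirror.

Variable n : nat.
Implicit Types (a b : nat) (i j : 'I_n) (A : {set 'I_n}).

Definition star_ord i : 'I_n := insubd i (n - i)%N.

Lemma val_star_ord i : (0 < i)%N -> star_ord i = (n - i)%N :> nat.
Proof.
by move=> i_gt0; rewrite val_insubd ltn_subrL i_gt0 (leq_ltn_trans _ (ltn_ord i)).
Qed.

Lemma star_ord_gt0 i : (0 < i)%N -> (0 < star_ord i)%N.
Proof. by move=> i_gt0; rewrite val_star_ord // subn_gt0. Qed.

Lemma star_ordK i : (0 < i)%N -> star_ord (star_ord i) = i.
Proof.
move=> i_gt0; apply: val_inj.
by rewrite /= val_star_ord ?star_ord_gt0 // val_star_ord // subKn // ltnW.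
Qed.

Lemma star_ord_inj i j : (0 < i)%N -> (0 < j)%N -> star_ord i = star_ord j -> i = j.
Proof. by move=> i_gt0 j_gt0 eq_ij; rewrite -(star_ordK i_gt0) eq_ij star_ordK. Qed.

Lemma star_setU1 i A : star (i |: A) = star_ord i |: star A.
Proof. exact: imsetU1. Qed.

Lemma mem_star i A : {in A, forall j, 0 < j}%N -> (0 < i)%N ->
  (star_ord i \in star A) = (i \in A).
Proof.
move=> A_gt0 i_gt0; apply/imsetP/idP => [[j jA /star_ord_inj eq_ij]|iA].
  by rewrite eq_ij // A_gt0.
by exists i.
Qed.

Definition ord_range a b : {set 'I_n} := [set i : 'I_n | a <= i < b]%N.

Lemma card_ord_range a b : (b <= n)%N -> #|ord_range a b| = (b - a)%N.
Proof.
elim: b => [|b IHb] le_bn.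
  have -> : ord_range a 0 = set0 by apply/setP => i; rewrite !inE ltn0 andbF.
  by rewrite cards0 sub0n.
have [le_ab|lt_ba] := leqP a b; last first.
  have -> : ord_range a b.+1 = set0 by apply/setP => i; rewrite !inE; lia.
  by rewrite cards0; lia.
have -> : ord_range a b.+1 = Ordinal le_bn |: ord_range a b.
  by apply/setP => i; rewrite !inE -val_eqE /=; lia.
by rewrite cardsU1 (IHb (ltnW le_bn)) inE /= ltnn andbF subSn.
Qed.

Lemma ord_range_gt0 a b : (0 < a)%N -> {in ord_range a b, forall i, 0 < i}%N.
Proof. by move=> a_gt0 i; rewrite inE; lia. Qed.

Lemma star_ord_range a b : (0 < a)%N -> (b <= n)%N ->
  star (ord_range a b) = ord_range (n.+1 - b) (n.+1 - a).
Proof.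
move=> a_gt0 le_bn; apply/setP => i; rewrite inE.
have lt_in := ltn_ord i.
apply/imsetP/idP => [[j] | range_i].
  by rewrite inE => range_j ->; rewrite val_star_ord; have := ltn_ord j; lia.
have i_gt0 : (0 < i)%N by lia.
exists (star_ord i); last exact: (esym (star_ordK i_gt0)).
by rewrite inE val_star_ord //; lia.
Qed.

End Mirror.

Lemma star_inord N i j : (0 < i)%N -> (0 < j)%N -> (i + j = N.+1)%N ->
  star_ord (inord i : 'I_N.+1) = inord j.
Proof.
move=> i_gt0 j_gt0 ij_eq; apply: val_inj => /=.
by rewrite val_star_ord !inordK //; lia.
Qed.

Section Products.

Variables (R : comNzRingType) (n : nat) (x : 'I_n -> R).
Implicit Types (i : 'I_n) (A : {set 'I_n}).

Lemma xprodU1 i A : i \notin A -> xprod x (i |: A) = x i * xprod x A.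
Proof. exact: big_setU1. Qed.

Lemma xprod_const c A : {in A, forall i, x i = c} -> xprod x A = c ^+ #|A|.
Proof. by move=> xA; rewrite /xprod (eq_bigr (fun=> c)) ?prodr_const. Qed.

End Products.

Section SymmetricConstraints.

Variables (R : realFieldType) (N k : nat) (gamma : R) (x : 'I_N.+1 -> R).
Local Notation n := N.+1.
Implicit Types (a i : 'I_n) (S : {set 'I_n}).

Hypothesis k_ge2 : (2 <= k)%N.
Hypothesis k_le : (k <= n - 3)%N.
Hypothesis x_gt0 : forall i : 'I_n, (0 < i)%N -> 0 < x i.
Hypothesis sym_sum : forall I : {set 'I_n}, (forall i : 'I_n, i \in I -> (0 < i)%N) ->
  #|I| = k -> xprod x I + xprod x (star I) = 2 * gamma.
Hypothesis x_mono : forall i j : 'I_n, (0 < i)%N -> (i <= j)%N -> x i <= x j.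

Lemma sym_sumU1 a S : (0 < a)%N -> {in S, forall i, 0 < i}%N -> #|S|.+1 = k ->
  a \notin S -> x a * xprod x S + x (star_ord a) * xprod x (star S) = 2 * gamma.
Proof.
move=> a_gt0 S_gt0 cardS aS.
rewrite -!xprodU1 -?star_setU1 ?mem_star //; apply: sym_sum.
  by move=> i /setU1P[->|/S_gt0].
by rewrite cardsU1 aS.
Qed.

Lemma sym_sum_swap a S : (0 < a)%N -> {in S, forall i, 0 < i}%N -> #|S|.+1 = k ->
  a \notin S -> star_ord a \notin S ->
  (x a - x (star_ord a)) * (xprod x S - xprod x (star S)) = 0.
Proof.
move=> a_gt0 S_gt0 cardS aS a'S.
have := sym_sumU1 (star_ord_gt0 a_gt0) S_gt0 cardS a'S; rewrite star_ordK // => sum'.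
have sum := sym_sumU1 a_gt0 S_gt0 cardS aS.
rewrite -[0](subrr (2 * gamma)) -{1}sum -sum'; ring.
Qed.

Let inord_gt0 (i : nat) : (0 < i <= N)%N -> (0 < (inord i : 'I_n))%N.
Proof. by move=> range_i; rewrite inordK; lia. Qed.

Let mem_inord_range (i a b : nat) : (i <= N)%N ->
  ((inord i : 'I_n) \in ord_range n a b) = (a <= i < b)%N.
Proof. by move=> le_iN; rewrite inE inordK. Qed.

Let mem_inord_setU1 (i j : nat) S : (i <= N)%N -> (j <= N)%N ->
  ((inord i : 'I_n) \in inord j |: S) = (i == j) || (inord i \in S).
Proof. by move=> le_iN le_jN; rewrite in_setU1 -val_eqE /= !inordK. Qed.

Let inord1_gt0 : (0 < (inord 1 : 'I_n))%N.
Proof. by apply: inord_gt0; lia. Qed.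

Let star_inord1 : star_ord (inord 1 : 'I_n) = inord N.
Proof. by apply: star_inord; lia. Qed.

Let star_inordN : star_ord (inord N : 'I_n) = inord 1.
Proof. by apply: star_inord; lia. Qed.

Let star_inord2 : star_ord (inord 2 : 'I_n) = inord N.-1.
Proof. by apply: star_inord; lia. Qed.

Let star_inordNm2 : star_ord (inord N.-1 : 'I_n) = inord 2.
Proof. by apply: star_inord; lia. Qed.

Lemma xprod_star_eq S : x (inord 1) != x (inord N) ->
  {in S, forall i, 0 < i}%N -> #|S|.+1 = k -> inord 1 \notin S -> inord N \notin S ->
  xprod x S = xprod x (star S).
Proof.
move=> ends_neq S_gt0 cardS S1 SN; apply/eqP; rewrite -subr_eq0.
have := sym_sum_swap inord1_gt0 S_gt0 cardS S1; rewrite star_inord1 => /(_ SN)/eqP.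
by rewrite mulf_eq0 !subr_eq0 (negbTE ends_neq).
Qed.

Lemma inner_ends_eq : x (inord 1) != x (inord N) -> x (inord 2) = x (inord N.-1).
Proof.
move=> ends_neq; pose M := ord_range n 3 k.+1.
have cardM : #|M| = (k - 2)%N by rewrite card_ord_range; lia.
have starM : star M = ord_range n (n - k) N.-1.
  by rewrite star_ord_range ?subSS ?subn1 //; lia.
have balanced_mid (i : nat) : i = 2 \/ i = N.-1 ->
    x (inord i) * xprod x M = x (star_ord (inord i)) * xprod x (star M).
  move=> i_mid; have le_iN : (i <= N)%N by lia.
  have iM : inord i \notin M by rewrite mem_inord_range; lia.
  have i'M : star_ord (inord i) \notin star M.
    by rewrite starM (@star_inord N i (n - i)%N) ?mem_inord_range; lia.
  rewrite -!xprodU1 // -star_setU1; apply: xprod_star_eq => //.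
  - by move=> j /setU1P[->|/ord_range_gt0->]; rewrite ?inord_gt0; lia.
  - by rewrite cardsU1 iM cardM; lia.
  - by rewrite mem_inord_setU1 ?mem_inord_range; lia.
  - by rewrite mem_inord_setU1 ?mem_inord_range; lia.
have p_gt0 : 0 < xprod x M.
  by apply: prodr_gt0 => i /ord_range_gt0 i_gt0; apply/x_gt0/i_gt0.
have q_gt0 : 0 < xprod x (star M).
  apply: prodr_gt0 => i; rewrite starM => /ord_range_gt0 i_gt0.
  by apply/x_gt0/i_gt0; lia.
have := balanced_mid _ (or_introl erefl); have := balanced_mid _ (or_intror erefl).
rewrite star_inord2 star_inordNm2; nra.
Qed.

Section MiddleConstant.

Variable c : R.
Hypothesis mid_c : forall i, (2 <= i < N)%N -> x i = c.

Let xprod_mid_range (l : nat) : (l <= k)%N ->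
  xprod x (ord_range n 2 (2 + l)) = c ^+ l /\
  xprod x (star (ord_range n 2 (2 + l))) = c ^+ l.
Proof.
have mid_range (a b : nat) : (2 <= a)%N -> (b <= N)%N ->
    xprod x (ord_range n a b) = c ^+ (b - a).
  move=> le2a le_bN; rewrite (xprod_const (c := c)) ?card_ord_range //; first lia.
  by move=> i; rewrite inE => range_i; apply: mid_c; lia.
move=> le_lk; rewrite star_ord_range //; last lia.
rewrite !mid_range; [|lia..].
by split; congr (_ ^+ _); lia.
Qed.

Lemma sym_sum_mid : c ^+ k + c ^+ k = 2 * gamma.
Proof.
have [mid star_mid] := xprod_mid_range (leqnn k).
rewrite -{1}mid -star_mid; apply: sym_sum; first exact: ord_range_gt0.
by rewrite card_ord_range; lia.
Qed.

Lemma sym_sum_one : x (inord 1) * c ^+ k.-1 + x (inord N) * c ^+ k.-1 = 2 * gamma.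
Proof.
have [mid star_mid] := xprod_mid_range (leq_pred k).
rewrite -{1}mid -star_mid -star_inord1; apply: sym_sumU1 => //.
- exact: ord_range_gt0.
- by rewrite card_ord_range; lia.
- by rewrite mem_inord_range; lia.
Qed.

Lemma sym_sum_ends : x (inord 1) * (x (inord N) * c ^+ (k - 2)) +
  x (inord N) * (x (inord 1) * c ^+ (k - 2)) = 2 * gamma.
Proof.
have [mid star_mid] := xprod_mid_range (leq_subr 2 k).
pose T := ord_range n 2 (2 + (k - 2)).
have NT : inord N \notin T by rewrite mem_inord_range; lia.
have star_NT : inord 1 \notin star T.
  by rewrite -star_inordN mem_star ?inord_gt0 //; [exact: ord_range_gt0 | lia].
rewrite -{1}mid -star_mid -(xprodU1 x NT) -(xprodU1 x star_NT).
rewrite -{2}star_inordN -{2}star_inord1 -star_setU1.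
apply: sym_sumU1 => //.
- by move=> i /setU1P[->|/ord_range_gt0->]; rewrite ?inord_gt0; lia.
- by rewrite cardsU1 NT card_ord_range; lia.
- by rewrite mem_inord_setU1 ?mem_inord_range; lia.
Qed.

(* With P := c^(k-2), the three sums equal 2 gamma and
   ((a - b) P c)^2 = ((a + b) P c)^2 - (2 a b P) (2 P c^2). *)
Lemma ends_eq_of_mid_const : x (inord 1) = x (inord N).
Proof.
have c_gt0 : 0 < c.
  by rewrite -(@mid_c (inord 2)) ?inordK; [apply/x_gt0/inord_gt0 | ..]; lia.
have Pc_gt0 : 0 < c ^+ (k - 2) * c by rewrite mulr_gt0 ?exprn_gt0.
have e_mid := sym_sum_mid; have e_one := sym_sum_one; have e_ends := sym_sum_ends.
rewrite -(subnK k_ge2) exprD in e_mid.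
rewrite -(subnK k_ge2) addn2 /= exprSr in e_one.
set a := x (inord 1) in e_one e_ends *; set b := x (inord N) in e_one e_ends *.
set P := c ^+ (k - 2) in Pc_gt0 e_mid e_one e_ends.
have : ((a - b) * (P * c)) ^+ 2 =
    (a * (P * c) + b * (P * c)) * (a * (P * c) + b * (P * c)) -
    (a * (b * P) + b * (a * P)) * (P * c ^+ 2 + P * c ^+ 2) by ring.
rewrite e_one e_ends e_mid subrr => /eqP.
by rewrite sqrf_eq0 mulf_eq0 (gt_eqF Pc_gt0) orbF subr_eq0 => /eqP.
Qed.

End MiddleConstant.

Lemma ends_eq : x (inord 1) = x (inord N).
Proof.
have [//|ends_neq] := eqVneq (x (inord 1)) (x (inord N)).
apply: (@ends_eq_of_mid_const (x (inord 2))) => i range_i.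
have le2i : x (inord 2) <= x i by apply: x_mono; rewrite ?inordK //; lia.
have leiN : x i <= x (inord N.-1) by apply: x_mono; rewrite ?inordK //; lia.
by apply: le_anti; rewrite le2i andbT (inner_ends_eq ends_neq).
Qed.

End SymmetricConstraints.

Unset Implicit Arguments.

Theorem lemma5p1 (R : realFieldType) (n k : nat) (gamma : R) (x : 'I_n -> R) :
  (5 <= n)%N -> (2 <= k)%N -> (k <= n - 3)%N -> 0 < gamma ->
  (forall i : 'I_n, (0 < i)%N -> 0 < x i) ->
  (forall i j : 'I_n, (0 < i)%N -> (i <= j)%N -> x i <= x j) ->
  (forall I : {set 'I_n}, (forall i : 'I_n, i \in I -> (0 < i)%N) -> #|I| = k ->
     xprod x I + xprod x (star I) = 2 * gamma) ->
  forall i j : 'I_n, (0 < i)%N -> (0 < j)%N -> x i = x j.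
Proof.
move=> n_ge5 k_ge2 k_le _ x_gt0 x_mono sym_sum.
case: n => [//|N] in x x_gt0 x_mono sym_sum k_le n_ge5 *.
have ends := ends_eq k_ge2 k_le x_gt0 sym_sum x_mono.
have squeeze (i : 'I_N.+1) : (0 < i)%N -> x i = x (inord 1).
  move=> i_gt0; apply: le_anti.
  by rewrite {1}ends !x_mono ?inordK //; have := ltn_ord i; lia.
by move=> i j /squeeze-> /squeeze->.
Qed.
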